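(* $\mathcal{R}_{MS}\subset\mathbb{C}_-=\{z\in\mathbb{C}:\Re(z)<0\}$. Equivalently, for every $z\in\mathbb{C}$ with $\Re(z)\ge0$, $\mathbb{E}\,\bigl|1+\frac{z}{1-z\tau_1}\bigr|^2\ge1$ (the expectation possibly being $+\infty$).
   Context: Let $\tau_1,\tau_2,\ldots$ be independent random variables uniformly distributed on $[0,1]$. Applying either of the randomized implicit RK2 schemes (S1) or (S2) with step $h>0$ to Dahlquist's test equation $z'(t)=\lambda z(t)$, $z(0)=1$, $\lambda\in\mathbb{C}$, gives, with $z=\lambda h$, $V^k=\prod_{j=1}^k\bigl(1+\frac{z}{1-z\tau_j}\bigr)$, $k\ge0$ (almost surely well defined). The mean-square stability region is $\mathcal{R}_{MS}=\{z\in\mathbb{C}: V^k\to0 \text{ in } L^2(\Omega)\text{ as } k\to\infty\}$; equivalently $\mathcal{R}_{MS}=\{z\in\mathbb{C}: \mathbb{E}\,|1+\frac{z}{1-z\tau_1}|^2<1\}$. *)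

From HB Require Import structures.
From mathcomp Require Import all_boot all_order all_algebra.
From mathcomp Require Import all_classical all_reals all_analysis.
From mathcomp Require Import complex.
Set Implicit Arguments. Unset Strict Implicit. Unset Printing Implicit Defensive.
Import Order.TTheory GRing.Theory Num.Theory.
Local Open Scope ring_scope.
Local Open Scope classical_set_scope.

(* Amplification factor of the randomized implicit RK2 schemes on Dahlquist's
   test equation, for z = lambda h and a realisation t of tau_1 in [0,1]:
   R(z,t) = 1 + z / (1 - z t).  (Division by 0 is the library's x/0 = 0;
   this happens for at most one t, a Lebesgue-null set.) *)
Definition ampl (R : realType) (z : R[i]) (t : R) : R[i] :=
  (1 + z / (1 - z * t%:C))%C.

Definition sqmod (R : realType) (w : R[i]) : R :=
  complex.Re w ^+ 2 + complex.Im w ^+ 2.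

(* E |R(z,tau_1)|^2 for tau_1 ~ U[0,1], as an extended real (possibly +oo). *)
Definition ms_second_moment (R : realType) (z : R[i]) : \bar R :=
  (\int[lebesgue_measure]_(t in `[0%R, 1%R]) (sqmod (ampl z t))%:E)%E.

Definition R_MS (R : realType) : set R[i] :=
  [set z | (ms_second_moment z < 1%:E)%E].

Definition C_minus (R : realType) : set R[i] := [set z | complex.Re z < 0].

From HB Require Import structures.
From mathcomp Require Import all_boot all_order all_algebra.
From mathcomp Require Import all_classical all_reals all_analysis.
From mathcomp Require Import complex.
From mathcomp Require Import measurable_realfun ring lra.
Import Order.TTheory GRing.Theory Num.Theory.
Local Open Scope ring_scope.
Local Open Scope classical_set_scope.

(* Write z = a + ib with a >= 0 and m = |z|^2.  Off its pole,
   |R(z,t)|^2 = 1 + (2a + m(1 - 2t)) / |1 - zt|^2.  The reflection t |-> 1 - t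
   preserves the uniform law on [0,1], so E|R|^2 is the mean of
   (|R(z,t)|^2 + |R(z,1-t)|^2) / 2, and with s = 1 - 2t the numerator of
   |R(z,t)|^2 + |R(z,1-t)|^2 - 2 is 4a(1 - a) + am(1 - s^2) + m^2 s^2, which is
   nonnegative because m >= a^2.  Hence E|R|^2 >= 1. *)

Lemma reflected_numer_ge0 (R : realFieldType) (a m s : R) :
  0 <= a -> a ^+ 2 <= m -> s ^+ 2 <= 1 ->
  0 <= 4 * a * (1 - a) + a * m * (1 - s ^+ 2) + m ^+ 2 * s ^+ 2.
Proof.
move=> a_ge0 am s1; have s2_ge0 := sqr_ge0 s.
have m_ge0 : 0 <= m by apply: le_trans am; exact: sqr_ge0.
have am_ge0 : 0 <= a * m by exact: mulr_ge0.
have [a_le1 | a_gt1] := lerP a 1.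
  have : 0 <= 4 * a * (1 - a) by rewrite mulr_ge0 ?mulr_ge0 ?subr_ge0.
  have : 0 <= a * m * (1 - s ^+ 2) by rewrite mulr_ge0 ?subr_ge0.
  have : 0 <= m ^+ 2 * s ^+ 2 by rewrite mulr_ge0 ?sqr_ge0.
  lra.
(* Now m >= a, so the last two terms are at least a m >= a^3, and
   4a(1 - a) + a^3 = a(a - 2)^2. *)
have : 0 <= m * s ^+ 2 * (m - a).
  by apply: mulr_ge0; [exact: mulr_ge0 | rewrite subr_ge0; nra].
have : a * a ^+ 2 <= a * m by rewrite ler_wpM2l.
have : 0 <= a * (a - 2) ^+ 2 by rewrite mulr_ge0 // sqr_ge0.
nra.
Qed.

Lemma measurable_fun_inv {R : realType} : measurable_fun [set: R] (@GRing.inv R).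
Proof.
have closed0 : closed ([set 0] : set R).
  by apply: compact_closed; [exact: Rhausdorff | exact: compact_set1].
have -> : [set: R] = ~` [set 0] `|` [set 0] by rewrite setUCl.
apply/measurable_funU.
- by apply: measurableC; exact: closed_measurable.
- exact: closed_measurable.
split; last exact: measurable_fun_set1.
apply: open_continuous_measurable_fun; first exact: closed_openC.
by move=> x; rewrite inE /= => /eqP x_neq0; exact: inv_continuous.
Qed.

Section lebesgue_reflection.
Context {R : realType}.
Local Notation mu := (@lebesgue_measure R).

Lemma lebesgue_measure_reflect (c : R) (A : set R) : measurable A ->
  pushforward mu (fun t => c - t : measurableTypeR R) A = mu A.
Proof.
move=> mA; apply/esym/lebesgue_measure_unique => //.
  exact: measurable_funB.
move=> mf _ [[x y] _ <-]; rewrite /= /pushforward.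
have -> : (fun t => c - t) @^-1` `]x, y] = `[c - y, c - x[.
  apply/seteqP; split => t /=; rewrite !in_itv /=.
    by move=> /andP[? ?]; apply/andP; split; lra.
  by move=> /andP[? ?]; apply/andP; split; lra.
rewrite !lebesgue_measure_itv /= !lte_fin ltrD2l ltrN2 -!EFinD.
by congr (if _ then _ else _); congr EFin; ring.
Qed.

Lemma ge0_integral_reflect (c : R) (D : set R) (f : R -> \bar R) :
  measurable D -> measurable_fun D f -> (forall x, D x -> (0 <= f x)%E) ->
  (\int[mu]_(x in (fun t => c - t)%R @^-1` D) f (c - x)%R =
   \int[mu]_(x in D) f x)%E.
Proof.
move=> mD mf f_ge0.
have mreflect : measurable_fun [set: measurableTypeR R]
    (fun t => c - t : measurableTypeR R) by exact: measurable_funB.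
rewrite -(ge0_integral_pushforward mreflect) //; last by move=> x /[!inE]; exact: f_ge0.
by apply: eq_measure_integral => A mA _; exact: lebesgue_measure_reflect.
Qed.

Lemma ge0_integral01_onem (f : R -> \bar R) :
  measurable_fun (`[0%R, 1%R] : set R) f -> (forall x, `[0%R, 1%R] x -> (0 <= f x)%E) ->
  (\int[mu]_(x in `[0%R, 1%R]) f (1 - x)%R = \int[mu]_(x in `[0%R, 1%R]) f x)%E.
Proof.
move=> mf f_ge0; rewrite -[RHS](ge0_integral_reflect 1) //.
suff -> : (fun t : R => 1 - t) @^-1` `[0%R, 1%R] = `[0%R, 1%R] by [].
by apply/seteqP; split => t /=; rewrite !in_itv /= => /andP[? ?]; apply/andP; split; lra.
Qed.

End lebesgue_reflection.

Section amplification_factor.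
Variable R : realType.
Implicit Types a b t : R.

Definition ampl_den a b t : R := (1 - a * t) ^+ 2 + (b * t) ^+ 2.

Lemma sqmod_amplE a b t : sqmod (ampl (a +i* b)%C t) =
  (1 + (a - (a ^+ 2 + b ^+ 2) * t) / ampl_den a b t) ^+ 2
  + (b / ampl_den a b t) ^+ 2.
Proof.
by rewrite /sqmod /ampl /ampl_den /= !mulr0 !subr0 ?add0r ?sub0r sqrrN; ring.
Qed.

(* The square collapses since (a - mt)^2 + b^2 = m |1 - zt|^2 with m = |z|^2. *)
Lemma sqmod_ampl_off_pole a b t : ampl_den a b t != 0 ->
  sqmod (ampl (a +i* b)%C t) =
  1 + (2 * a + (a ^+ 2 + b ^+ 2) * (1 - 2 * t)) / ampl_den a b t.
Proof. by rewrite sqmod_amplE /ampl_den => den_neq0; field. Qed.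

Lemma ampl_den_eq0 a b t : ampl_den a b t = 0 -> t = a^-1.
Proof.
rewrite /ampl_den => den0.
have /eqP : 1 - a * t = 0.
  by apply/eqP; rewrite -sqrf_eq0 eq_le sqr_ge0 andbT -den0 lerDl sqr_ge0.
rewrite subr_eq0 eq_sym => /eqP at1.
have a_neq0 : a != 0.
  by apply: contra_eq_neq at1 => ->; rewrite mul0r eq_sym oner_neq0.
by apply: (mulfI a_neq0); rewrite at1 mulfV.
Qed.

Lemma ampl_den_gt0 a b t : ampl_den a b t != 0 -> 0 < ampl_den a b t.
Proof. by move=> den_neq0; rewrite lt_def den_neq0 addr_ge0 ?sqr_ge0. Qed.

Lemma sqmod_ampl_reflect_ge2 a b t : 0 <= a -> 0 <= t <= 1 ->
  ampl_den a b t != 0 -> ampl_den a b (1 - t) != 0 ->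
  2 <= sqmod (ampl (a +i* b)%C t) + sqmod (ampl (a +i* b)%C (1 - t)).
Proof.
move=> a_ge0 /andP[t_ge0 t_le1] den_neq0 den'_neq0.
rewrite !sqmod_ampl_off_pole // -subr_ge0.
set m := a ^+ 2 + b ^+ 2; set s := 1 - 2 * t.
have -> : 1 - 2 * (1 - t) = - s by rewrite /s; ring.
have -> : 1 + (2 * a + m * s) / ampl_den a b t
      + (1 + (2 * a + m * - s) / ampl_den a b (1 - t)) - 2
    = (4 * a * (1 - a) + a * m * (1 - s ^+ 2) + m ^+ 2 * s ^+ 2)
      / (ampl_den a b t * ampl_den a b (1 - t)).
  by move: den_neq0 den'_neq0; rewrite /m /s /ampl_den => ? ?; field; apply/andP.
apply: divr_ge0; last by rewrite mulr_ge0 // ltW // ampl_den_gt0.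
apply: reflected_numer_ge0 => //; first by rewrite lerDl sqr_ge0.
by rewrite /s; nra.
Qed.

Lemma measurable_sqmod_ampl (z : R[i]) :
  measurable_fun [set: R] (fun t => sqmod (ampl z t)).
Proof.
case: z => a b; under eq_fun do rewrite sqmod_amplE.
have mden_inv : measurable_fun [set: R] (fun t => (ampl_den a b t)^-1).
  apply: measurableT_comp measurable_fun_inv _.
  apply: measurable_funD; apply: measurable_funX.
    by apply: measurable_funB => //; apply: measurable_funM.
  by apply: measurable_funM.
apply: measurable_funD; apply: measurable_funX; last exact: measurable_funM.
apply: measurable_funD => //; apply: measurable_funM => //.
by apply: measurable_funB => //; apply: measurable_funM.
Qed.

Lemma sqmod_ampl_reflect_ge2_ae a b : 0 <= a ->
  {ae lebesgue_measure, forall t, `[0%R, 1%R] t ->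
    (2%:E <= (sqmod (ampl (a +i* b)%C t))%:E
             + (sqmod (ampl (a +i* b)%C (1 - t)))%:E)%E}.
Proof.
move=> a_ge0.
apply: (@negligibleS _ _ _ lebesgue_measure ([set a^-1] `|` [set 1 - a^-1])).
  move=> t /= not_ge2; apply: contrapT => not_pole; apply: not_ge2 => t01.
  rewrite -EFinD lee_fin; apply: sqmod_ampl_reflect_ge2 => //.
    by apply/eqP => /ampl_den_eq0 ta; apply: not_pole; left.
  by apply/eqP => /ampl_den_eq0 ta; apply: not_pole; right => /=; rewrite -ta; ring.
by apply: negligibleU; apply/negligibleP => //; exact: lebesgue_measure_set1.
Qed.

Lemma ms_second_moment_ge1 (z : R[i]) :
  0 <= complex.Re z -> (1 <= ms_second_moment z)%E.
Proof.
case: z => a b /= a_ge0; rewrite /ms_second_moment.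
set g := fun t => sqmod (ampl (a +i* b)%C t).
have g_ge0 t : (0 <= (g t)%:E)%E by rewrite lee_fin /g /sqmod addr_ge0 ?sqr_ge0.
have mg : measurable_fun (`[0%R, 1%R] : set R) (fun t => (g t)%:E).
  by apply/measurable_EFinP/measurable_funTS; exact: measurable_sqmod_ampl.
have mg_reflect : measurable_fun (`[0%R, 1%R] : set R) (fun t => (g (1 - t))%:E).
  apply/measurable_EFinP/measurable_funTS.
  by apply: measurableT_comp (measurable_sqmod_ampl _) _; exact: measurable_funB.
set I := (\int[lebesgue_measure]_(t in `[0%R, 1%R]) (g t)%:E)%E.
have two_le : (2%:E <= I + I)%E.
  rewrite /I -{2}ge0_integral01_onem // -ge0_integralD //.
  have -> : (2%:E : \bar R) =
      (\int[lebesgue_measure]_(t in `[0%R, 1%R]) (cst 2%:E) t)%E.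
    rewrite integral_cst //= lebesgue_measure_itv /= lte_fin ltr01.
    by rewrite -EFinB -EFinM subr0 mulr1.
  apply: ae_ge0_le_integral => //.
  - by move=> t _; rewrite lee_fin.
  - by move=> t _; rewrite adde_ge0.
  - exact: emeasurable_funD.
  - exact: sqmod_ampl_reflect_ge2_ae.
have I_ge0 : (0 <= I)%E by exact: integral_ge0.
clearbody I; case: I two_le I_ge0 => [r | | ] //=.
  by rewrite -EFinD !lee_fin => ? ?; lra.
by move=> _ _; exact: leey.
Qed.

End amplification_factor.

Theorem fact2 (R : realType) : @R_MS R `<=` @C_minus R.
Proof.
move=> z z_stable; rewrite /C_minus /= ltNge; apply/negP => Re_ge0.
by move: z_stable; rewrite /R_MS /= ltNge ms_second_moment_ge1.
Qed.
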